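(* In the compulsory constrained two-facility location game described in the context, every deterministic strategyproof mechanism has approximation ratio at least $3$ under the maximum cost objective.
   Context: An instance consists of $n$ agents with private locations $x_1,\dots,x_n\in\mathbb{R}$, each served by both facilities $F_1,F_2$, and a finite multiset $A=\{a_1\le\dots\le a_m\}$ of real alternative locations. A deterministic mechanism $f$ maps each instance (reported locations and $A$) to $(y_1,y_2)$ with $y_1\in A$, $y_2\in A\setminus\{y_1\}$ (one copy removed). Agent $j$'s cost is $\max\{|y_1-x_j|,|y_2-x_j|\}$; the maximum cost is $\max_j$ of agents' costs. $f$ is strategyproof if no agent can strictly decrease her true cost by misreporting her own location, whatever the others report. The approximation ratio is the supremum over instances of $f$'s maximum cost divided by the optimal (minimum over feasible outcomes) maximum cost. *)

From Stdlib Require Import Reals List.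
Open Scope R_scope.

(* Remove ONE copy of a from the list l (multiset difference A \ {y1}). *)
Fixpoint remove1 (a : R) (l : list R) : list R :=
  match l with
  | nil => nil
  | b :: l' => if Req_EM_T a b then l' else b :: remove1 a l'
  end.

Definition feasible (A : list R) (y : R * R) : Prop :=
  In (fst y) A /\ In (snd y) (remove1 (fst y) A).

(* Cost of an agent at x: served by both facilities. *)
Definition agent_cost (y : R * R) (x : R) : R :=
  Rmax (Rabs (fst y - x)) (Rabs (snd y - x)).

(* Maximum cost over all agents (costs are >= 0, so 0 is a neutral base). *)
Definition max_cost (xs : list R) (y : R * R) : R :=
  fold_right (fun x acc => Rmax (agent_cost y x) acc) 0 xs.

Definition is_opt (xs A : list R) (c : R) : Prop :=
  (exists y, feasible A y /\ max_cost xs y = c) /\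
  (forall y, feasible A y -> c <= max_cost xs y).

(* A deterministic mechanism: agents' reported locations, alternatives |-> outcome. *)
Definition mechanism := list R -> list R -> R * R.

Definition feasible_mech (f : mechanism) : Prop :=
  forall xs A, (2 <= length A)%nat -> feasible A (f xs A).

Definition misreport (xs : list R) (i : nat) (x' : R) : list R :=
  firstn i xs ++ x' :: skipn (S i) xs.

Definition strategyproof (f : mechanism) : Prop :=
  forall xs A, (2 <= length A)%nat ->
  forall i x', (i < length xs)%nat ->
    agent_cost (f xs A) (nth i xs 0) <=
    agent_cost (f (misreport xs i x') A) (nth i xs 0).

From Stdlib Require Import Reals List Lra Lia.
Open Scope R_scope.
Import ListNotations.

(* Take the alternatives A = {0, 0, 2, 2} and two agents at 1 - e and 1 + e.
   If the mechanism builds both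
   facilities at 2, the agent at 1 - e may report -1: to keep her cost at
   least 1 + e the mechanism cannot answer (0, 0), so some facility is at 2
   and the agent at -1 pays 3, while (0, 0) costs only 1 + e.  Otherwise some
   facility is at 0 and, symmetrically, the agent at 1 + e reports 3.  The
   ratio 3 / (1 + e) tends to 3 as e tends to 0. *)

Lemma in_remove1 (a x : R) (l : list R) : In x (remove1 a l) -> In x l.
Proof.
  induction l as [|b l IH]; simpl; [easy|].
  destruct (Req_EM_T a b); simpl; intuition.
Qed.

Lemma feasible_in (A : list R) (y : R * R) :
  feasible A y -> In (fst y) A /\ In (snd y) A.
Proof. intros [H1 H2]; split; [exact H1 | exact (in_remove1 _ _ _ H2)]. Qed.

Lemma agent_cost_ge_fst (y : R * R) (x : R) : Rabs (fst y - x) <= agent_cost y x.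
Proof. apply Rmax_l. Qed.

Lemma agent_cost_ge_snd (y : R * R) (x : R) : Rabs (snd y - x) <= agent_cost y x.
Proof. apply Rmax_r. Qed.

Lemma agent_cost_diag (a x : R) : agent_cost (a, a) x = Rabs (a - x).
Proof. apply Rmax_left, Rle_refl. Qed.

Lemma agent_cost_nonneg (y : R * R) (x : R) : 0 <= agent_cost y x.
Proof. eapply Rle_trans; [apply Rabs_pos | apply agent_cost_ge_fst]. Qed.

Lemma max_cost_pair (x1 x2 : R) (y : R * R) :
  max_cost [x1; x2] y = Rmax (agent_cost y x1) (agent_cost y x2).
Proof.
  unfold max_cost; simpl.
  now rewrite (Rmax_left (agent_cost y x2) 0) by apply agent_cost_nonneg.
Qed.

Lemma strategyproof_first (f : mechanism) (A : list R) (x1 x2 x' : R) :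
  strategyproof f -> (2 <= length A)%nat ->
  agent_cost (f [x1; x2] A) x1 <= agent_cost (f [x'; x2] A) x1.
Proof. intros Hsp HA; exact (Hsp [x1; x2] A HA 0%nat x' ltac:(simpl; lia)). Qed.

Lemma strategyproof_second (f : mechanism) (A : list R) (x1 x2 x' : R) :
  strategyproof f -> (2 <= length A)%nat ->
  agent_cost (f [x1; x2] A) x2 <= agent_cost (f [x1; x'] A) x2.
Proof. intros Hsp HA; exact (Hsp [x1; x2] A HA 1%nat x' ltac:(simpl; lia)). Qed.

Definition alt02 : list R := [0; 0; 2; 2].

Lemma length_alt02 : (2 <= length alt02)%nat.
Proof. simpl; lia. Qed.

Lemma feasible_alt02 (y : R * R) :
  feasible alt02 y -> (fst y = 0 \/ fst y = 2) /\ (snd y = 0 \/ snd y = 2).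
Proof. intros [H1 H2]%feasible_in; simpl in H1, H2; intuition. Qed.

Lemma feasible_alt02_diag (a : R) : a = 0 \/ a = 2 -> feasible alt02 (a, a).
Proof.
  intros Ha; unfold feasible; simpl.
  destruct Ha as [-> | ->]; split; [tauto | | tauto |];
    repeat (destruct Req_EM_T; try lra); simpl; tauto.
Qed.

Lemma alt02_outcome_cases (b : R) (y : R * R) :
  b = 0 \/ b = 2 -> feasible alt02 y ->
  y = (2 - b, 2 - b) \/ fst y = b \/ snd y = b.
Proof.
  intros Hb Hy; destruct y as [u v].
  apply feasible_alt02 in Hy; simpl in *.
  destruct Hb as [-> | ->], Hy as [[-> | ->] [-> | ->]];
    first [right; lra | left; f_equal; lra].
Qed.

Lemma agent_cost_ge_used (b x : R) (y : R * R) :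
  fst y = b \/ snd y = b -> Rabs (b - x) <= agent_cost y x.
Proof.
  intros [<- | <-]; [apply agent_cost_ge_fst | apply agent_cost_ge_snd].
Qed.

Ltac solve_costs :=
  rewrite ?max_cost_pair; unfold agent_cost; simpl;
  repeat match goal with
  | |- context [Rabs ?x] =>
      first [ rewrite (Rabs_pos_eq x) by lra | rewrite (Rabs_left1 x) by lra ]
  end;
  repeat match goal with
  | |- context [Rmax ?a ?b] =>
      first [ rewrite (Rmax_left a b) by lra | rewrite (Rmax_right a b) by lra ]
  end;
  lra.

Lemma is_opt_alt02 (xs : list R) (c a : R) :
  a = 0 \/ a = 2 -> max_cost xs (a, a) = c ->
  (forall u v, (u = 0 \/ u = 2) -> (v = 0 \/ v = 2) -> c <= max_cost xs (u, v)) ->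
  is_opt xs alt02 c.
Proof.
  intros Ha Hc Hmin; split.
  - exists (a, a); split; [apply feasible_alt02_diag, Ha | exact Hc].
  - intros [u v] [Hu Hv]%feasible_alt02; exact (Hmin u v Hu Hv).
Qed.

Section Deviations.

Variable f : mechanism.
Hypothesis f_feasible : feasible_mech f.
Hypothesis f_strategyproof : strategyproof f.
Variable e : R.
Hypothesis e_pos : 0 < e.
Hypothesis e_le1 : e <= 1.

Lemma is_opt_left_deviation : is_opt [-1; 1 + e] alt02 (1 + e).
Proof.
  apply (is_opt_alt02 _ _ 0); [now left | solve_costs |].
  intros u v [-> | ->] [-> | ->]; solve_costs.
Qed.

Lemma is_opt_right_deviation : is_opt [1 - e; 3] alt02 (1 + e).
Proof.
  apply (is_opt_alt02 _ _ 2); [now right | solve_costs |].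
  intros u v [-> | ->] [-> | ->]; solve_costs.
Qed.

Lemma left_deviation_cost :
  f [1 - e; 1 + e] alt02 = (2, 2) -> 3 <= max_cost [-1; 1 + e] (f [-1; 1 + e] alt02).
Proof.
  intros Hf0.
  pose proof (strategyproof_first f alt02 (1 - e) (1 + e) (-1)
                f_strategyproof length_alt02) as Hsp.
  rewrite Hf0, agent_cost_diag in Hsp.
  destruct (alt02_outcome_cases 2 (f [-1; 1 + e] alt02) ltac:(now right)
              (f_feasible _ _ length_alt02)) as [Hz | Hz].
  - rewrite Hz, Rminus_diag, agent_cost_diag, Rabs_pos_eq in Hsp by lra.
    assert (Rabs (0 - (1 - e)) < 1 + e) by (apply Rabs_def1; lra); lra.
  - rewrite max_cost_pair.
    eapply Rle_trans; [| apply Rmax_l].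
    eapply Rle_trans; [| apply (agent_cost_ge_used 2), Hz].
    rewrite Rabs_pos_eq; lra.
Qed.

Lemma right_deviation_cost :
  fst (f [1 - e; 1 + e] alt02) = 0 \/ snd (f [1 - e; 1 + e] alt02) = 0 ->
  3 <= max_cost [1 - e; 3] (f [1 - e; 3] alt02).
Proof.
  intros Hf0.
  pose proof (strategyproof_second f alt02 (1 - e) (1 + e) 3
                f_strategyproof length_alt02) as Hsp.
  pose proof (agent_cost_ge_used 0 (1 + e) _ Hf0) as Hcost0.
  destruct (alt02_outcome_cases 0 (f [1 - e; 3] alt02) ltac:(now left)
              (f_feasible _ _ length_alt02)) as [Hz | Hz].
  - rewrite Hz, Rminus_0_r, agent_cost_diag in Hsp.
    rewrite Rabs_left in Hcost0 by lra.
    assert (Rabs (2 - (1 + e)) < 1 + e) by (apply Rabs_def1; lra); lra.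
  - rewrite max_cost_pair.
    eapply Rle_trans; [| apply Rmax_r].
    eapply Rle_trans; [| apply (agent_cost_ge_used 0), Hz].
    rewrite Rabs_left; lra.
Qed.

Lemma deviation_instance :
  exists xs, xs <> nil /\ is_opt xs alt02 (1 + e) /\ 3 <= max_cost xs (f xs alt02).
Proof.
  destruct (alt02_outcome_cases 0 (f [1 - e; 1 + e] alt02) ltac:(now left)
              (f_feasible _ _ length_alt02)) as [Hf0 | Hf0].
  - exists [-1; 1 + e]; split; [discriminate | split].
    + exact is_opt_left_deviation.
    + apply left_deviation_cost; rewrite Hf0; f_equal; lra.
  - exists [1 - e; 3]; split; [discriminate | split].
    + exact is_opt_right_deviation.
    + exact (right_deviation_cost Hf0).
Qed.

End Deviations.

Lemma exists_margin_below_3 (rho : R) :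
  rho < 3 -> exists e, 0 < e /\ e <= 1 /\ rho * (1 + e) < 3.
Proof.
  intros Hrho; destruct (Rle_dec rho 0).
  - exists (1/2); repeat split; nra.
  - exists ((3 - rho) / 6); repeat split; nra.
Qed.

Theorem theorem3 :
  forall f : mechanism, feasible_mech f -> strategyproof f ->
  forall rho : R, rho < 3 ->
  exists (xs A : list R) (c : R),
    (2 <= length A)%nat /\ xs <> nil /\ is_opt xs A c /\ 0 < c /\
    rho * c < max_cost xs (f xs A).
Proof.
  intros f Hf Hsp rho Hrho.
  destruct (exists_margin_below_3 rho Hrho) as (e & He & He1 & Hratio).
  destruct (deviation_instance f Hf Hsp e He He1) as (xs & Hxs & Hopt & Hcost).
  exists xs, alt02, (1 + e).
  refine (conj length_alt02 (conj Hxs (conj Hopt (conj _ _)))); lra.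
Qed.
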